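(* Under the three-receiver coding module below, at the beginning of any slot $t>0$, at least one receiver has decoded all of the packets $\mathbf{p}_1,\dots,\mathbf{p}_{m(t)}$, where $m(t)$ is the maximum rank among the three receivers at the beginning of slot $t$.
   Context: A sender broadcasts packets $\mathbf{p}_1,\mathbf{p}_2,\dots$ (indexed by arrival order, vectors over $\mathbb{F}_3$) to three receivers $1,2,3$ over a slotted erasure broadcast channel; each slot it transmits at most one linear combination of arrived packets, each receiver either receives it or suffers an erasure, and perfect feedback gives the sender every receiver's knowledge. The rank of a receiver is the dimension of the space of linear combinations it knows. Receiver $i$ has heard of a packet if it knows some linear combination involving that packet (with nonzero coefficient); $H_i$ is the set of packets it has heard of and $D_i$ the set it has decoded. ''Oldest'' means smallest index. Coding module: labels $L,N,D$ form a permutation of $\{1,2,3\}$; initially $L=1,N=2,D=3,m=0$. Each slot: let $U=\{\mathbf{p}_1,\dots,\mathbf{p}_m\}$ together with $\mathbf{p}_{m+1}$ if it has arrived, and set $S_1=D_N\cap D_D$, $S_2=D_N\cap(H_D\setminus D_D)$, $S_3=D_N\setminus H_D$, $S_4=D_D\setminus D_N$, $S_5=(H_D\setminus D_D)\setminus D_N$, $S_6=U\setminus(H_D\cup D_N)$. Transmit: Case 1 ($\mathbf{p}_{m+1}$ not arrived): if $S_2,S_4$ both nonempty send the sum of their oldest packets; else if $S_3,S_4$ both nonempty send the sum of their oldest packets; else send the oldest packet of the first nonempty set among $S_5,S_6,S_2,S_3,S_4$; if all are empty send nothing. Case 2 ($\mathbf{p}_{m+1}\in S_1$): send $\mathbf{p}_{m+1}$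 plus whatever Case 1 would send. Case 3 ($\mathbf{p}_{m+1}\in S_2$): send $\mathbf{p}_{m+1}+c\mathbf{p}$ with $\mathbf{p}$ the oldest packet of the first nonempty set among $S_4,S_5,S_6$, where $c=1$ unless $\mathbf{p}\in S_5$, in which case $c\in\{1,2\}$ is chosen so that the combination is innovative to receiver $D$. Case 4 ($\mathbf{p}_{m+1}\in S_3$): send $\mathbf{p}_{m+1}+\mathbf{p}$, $\mathbf{p}$ the oldest packet of the first nonempty set among $S_4,S_5,S_6$. Case 5 ($\mathbf{p}_{m+1}\in S_4$): send $\mathbf{p}_{m+1}+\mathbf{p}$, $\mathbf{p}$ the oldest packet of the first nonempty set among $S_2,S_3,S_6$. (In Cases 3–5, if all listed sets are empty, $\mathbf{p}_{m+1}$ is sent alone.) Case 6 (otherwise): send $\mathbf{p}_{m+1}$. After feedback, update $H_i,D_i$, set $m$ to the maximum rank of the three receivers; among receivers that have decoded all of $\mathbf{p}_1,\dots,\mathbf{p}_m$, label the one with lowest index $L$ (if there is none, assign labels arbitrarily); of the other two receivers, if exactly one has nonempty unsolved set $H_i\setminus D_i$, label it $D$ and the other $N$; otherwise assign $D,N$ arbitrarily. *)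

(* Three-receiver coding module over F_3 (receivers 1,2,3 are
   the ordinals 0,1,2 : 'I_3; packet p_(j+1) is index j : nat, i.e. 0-based). *)
From HB Require Import structures.
From mathcomp Require Import all_boot all_order all_algebra.
Set Implicit Arguments. Unset Strict Implicit. Unset Printing Implicit Defensive.
Import GRing.Theory.
Local Open Scope ring_scope.

(* A linear combination of packets is given by its coefficient sequence:
   coefficient of packet j is v`_j (implicit trailing zeros). *)
Definition cv := seq 'F_3.

Definition cvunit (j : nat) : cv := rcons (nseq j 0) 1.
Definition cvadd (u v : cv) : cv :=
  mkseq (fun k => u`_k + v`_k) (maxn (size u) (size v)).
Definition cvscale (c : 'F_3) (u : cv) : cv := map (fun x => c * x) u.
Definition sum2 (p q : nat) : cv := cvadd (cvunit p) (cvunit q).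

(* knowledge of a receiver: the list of combinations it received *)
Definition inspan (K : seq cv) (v : cv) : Prop :=
  exists c : seq 'F_3, forall j : nat,
    v`_j = \sum_(k < size K) c`_k * (nth [::] K k)`_j.

Definition decoded (K : seq cv) (j : nat) : Prop := inspan K (cvunit j).
Definition heard (K : seq cv) (j : nat) : Prop :=
  exists v, inspan K v /\ v`_j != 0.
Definition unsolved (K : seq cv) : Prop :=
  exists j, heard K j /\ ~ decoded K j.

Definition width (K : seq cv) : nat := (\max_(v <- K) size v)%N.
Definition kmx (K : seq cv) : 'M['F_3]_(size K, width K) :=
  \matrix_(i < size K, j < width K) (nth [::] K i)`_j.
Definition rank (K : seq cv) : nat := \rank (kmx K).

Definition knowledge := 'I_3 -> seq cv.
Definition maxrank (Ks : knowledge) : nat := (\max_(i < 3) rank (Ks i))%N.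

Definition alldec (K : seq cv) (m : nat) : Prop :=
  forall j, (j < m)%N -> decoded K j.

(* packet sets; a = number of arrived packets, m = current m *)
Definition S1 (Ks : knowledge) (N D : 'I_3) (j : nat) : Prop :=
  decoded (Ks N) j /\ decoded (Ks D) j.
Definition S2 (Ks : knowledge) (N D : 'I_3) (j : nat) : Prop :=
  decoded (Ks N) j /\ (heard (Ks D) j /\ ~ decoded (Ks D) j).
Definition S3 (Ks : knowledge) (N D : 'I_3) (j : nat) : Prop :=
  decoded (Ks N) j /\ ~ heard (Ks D) j.
Definition S4 (Ks : knowledge) (N D : 'I_3) (j : nat) : Prop :=
  decoded (Ks D) j /\ ~ decoded (Ks N) j.
Definition S5 (Ks : knowledge) (N D : 'I_3) (j : nat) : Prop :=
  (heard (Ks D) j /\ ~ decoded (Ks D) j) /\ ~ decoded (Ks N) j.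
Definition inU (m a j : nat) : Prop := (j < m)%N \/ (j = m /\ (m < a)%N).
Definition S6 (Ks : knowledge) (N D : 'I_3) (m a j : nat) : Prop :=
  inU m a j /\ ~ (heard (Ks D) j \/ decoded (Ks N) j).

Definition nonempty (S : nat -> Prop) : Prop := exists j, S j.
Definition oldest (S : nat -> Prop) (p : nat) : Prop :=
  S p /\ forall q, S q -> (p <= q)%N.

Fixpoint first_oldest (Ss : seq (nat -> Prop)) (o : option nat) : Prop :=
  match Ss with
  | [::] => o = None
  | P :: Ss' => (nonempty P /\ exists p, oldest P p /\ o = Some p)
                \/ (~ nonempty P /\ first_oldest Ss' o)
  end.

(* Case 1 transmission (x = None : nothing is sent) *)
Definition case1 (Ks : knowledge) (N D : 'I_3) (m a : nat) (x : option cv) : Prop :=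
  let s2 := S2 Ks N D in let s3 := S3 Ks N D in let s4 := S4 Ks N D in
  let s5 := S5 Ks N D in let s6 := S6 Ks N D m a in
  (nonempty s2 /\ nonempty s4 /\
     exists p q, oldest s2 p /\ oldest s4 q /\ x = Some (sum2 p q))
  \/ (~ (nonempty s2 /\ nonempty s4) /\ nonempty s3 /\ nonempty s4 /\
     exists p q, oldest s3 p /\ oldest s4 q /\ x = Some (sum2 p q))
  \/ (~ (nonempty s2 /\ nonempty s4) /\ ~ (nonempty s3 /\ nonempty s4) /\
     exists o, first_oldest [:: s5; s6; s2; s3; s4] o /\ x = omap cvunit o).

Definition plus_opt (m : nat) (o : option nat) : cv :=
  match o with None => cvunit m | Some p => sum2 m p end.

(* the packet sent in a slot, given knowledge Ks, labels N D, m, and the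
   number a of arrived packets (p_(m+1) has arrived iff m < a) *)
Definition transmit (Ks : knowledge) (N D : 'I_3) (m a : nat) (x : option cv) : Prop :=
  let s1 := S1 Ks N D in let s2 := S2 Ks N D in let s3 := S3 Ks N D in
  let s4 := S4 Ks N D in let s5 := S5 Ks N D in let s6 := S6 Ks N D m a in
  (~ (m < a)%N /\ case1 Ks N D m a x)
  \/ ((m < a)%N /\ s1 m /\ exists y, case1 Ks N D m a y /\
        x = Some (match y with None => cvunit m | Some v => cvadd (cvunit m) v end))
  \/ ((m < a)%N /\ s2 m /\ exists o, first_oldest [:: s4; s5; s6] o /\
        match o with
        | None => x = Some (cvunit m)
        | Some p =>
            (s5 p /\ exists c : 'F_3, (c = 1 \/ c = 2) /\
               x = Some (cvadd (cvunit m) (cvscale c (cvunit p))) /\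
               ~ inspan (Ks D) (cvadd (cvunit m) (cvscale c (cvunit p))))
            \/ (~ s5 p /\ x = Some (sum2 m p))
        end)
  \/ ((m < a)%N /\ s3 m /\ exists o, first_oldest [:: s4; s5; s6] o /\
        x = Some (plus_opt m o))
  \/ ((m < a)%N /\ s4 m /\ exists o, first_oldest [:: s2; s3; s6] o /\
        x = Some (plus_opt m o))
  \/ ((m < a)%N /\ ~ s1 m /\ ~ s2 m /\ ~ s3 m /\ ~ s4 m /\ x = Some (cvunit m)).

Definition receive (Ks : knowledge) (x : option cv) (r : 'I_3 -> bool) : knowledge :=
  fun i => match x with
           | Some v => if r i then rcons (Ks i) v else Ks i
           | None => Ks i
           end.

Definition relabel (Ks : knowledge) (L N D : 'I_3) : Prop :=
  let m := maxrank Ks in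
  [/\ L != N, L != D, N != D,
      (exists i, alldec (Ks i) m) ->
        alldec (Ks L) m /\ (forall i, alldec (Ks i) m -> (L <= i)%N)
    & ~ (unsolved (Ks N) /\ ~ unsolved (Ks D))].

Record state := State {
  know : knowledge; labL : 'I_3; labN : 'I_3; labD : 'I_3; mcur : nat }.

Definition initial (s : state) : Prop :=
  (forall i, know s i = [::]) /\ labL s = inord 0 /\ labN s = inord 1 /\
  labD s = inord 2 /\ mcur s = 0%N.

Definition step (a : nat) (r : 'I_3 -> bool) (s s' : state) : Prop :=
  exists x, transmit (know s) (labN s) (labD s) (mcur s) a x /\
    (forall i, know s' i = receive (know s) x r i) /\
    mcur s' = maxrank (know s') /\
    relabel (know s') (labL s') (labN s') (labD s').

(* Every combination the sender transmits while m is current involves only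
   p_1, ..., p_(m+1), so by induction all knowledge lies in the span of
   p_1, ..., p_(m+1), where m is the maximum rank.  After one more slot the
   maximum rank is m or m + 1.  If it is m, the receiver that had decoded
   p_1, ..., p_m still has.  If it is m + 1, some receiver knows an
   (m+1)-dimensional subspace of an (m+1)-dimensional space, i.e. all of it. *)
From mathcomp Require Import all_boot all_order all_algebra.
Set Implicit Arguments. Unset Strict Implicit. Unset Printing Implicit Defensive.
Import GRing.Theory.
Local Open Scope ring_scope.

Definition supported (n : nat) (v : cv) : Prop := forall j, (n <= j)%N -> v`_j = 0.
Definition all_supported (n : nat) (K : seq cv) : Prop :=
  forall k, (k < size K)%N -> supported n (nth [::] K k).

Lemma cvunit_nth j k : (cvunit j)`_k = (k == j)%:R.
Proof.
rewrite /cvunit nth_rcons size_nseq nth_nseq.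
by case: ltngtP => // H; rewrite ?(ltn_eqF H) // eq_sym ?(ltn_eqF H).
Qed.

Lemma supported_cvunit n j : (j < n)%N -> supported n (cvunit j).
Proof.
move=> ltjn k lenk; rewrite cvunit_nth; case: eqP => // Ekj.
by rewrite Ekj leqNgt ltjn in lenk.
Qed.

Lemma supported_cvadd n u v : supported n u -> supported n v -> supported n (cvadd u v).
Proof.
move=> su sv k lenk; rewrite /cvadd; case: (ltnP k (maxn (size u) (size v))) => Hk.
  by rewrite nth_mkseq // su // sv // addr0.
by rewrite nth_default // size_mkseq.
Qed.

Lemma supported_cvscale n c u : supported n u -> supported n (cvscale c u).
Proof.
move=> su k lenk; rewrite /cvscale; case: (ltnP k (size u)) => Hk.
  by rewrite (nth_map 0) // su // mulr0.
by rewrite nth_default // size_map.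
Qed.

Lemma supported_sum2 n p q : (p < n)%N -> (q < n)%N -> supported n (sum2 p q).
Proof. by move=> ltpn ltqn; apply: supported_cvadd; apply: supported_cvunit. Qed.

Lemma supported_leq n n' v : (n <= n')%N -> supported n v -> supported n' v.
Proof. by move=> lenn' sv j lejn; apply: sv; apply: leq_trans lenn' lejn. Qed.

Lemma all_supported_leq n n' K : (n <= n')%N -> all_supported n K -> all_supported n' K.
Proof. by move=> lenn' sK k ltkK; apply: supported_leq lenn' (sK k ltkK). Qed.

Lemma all_supported_rcons n K v :
  all_supported n K -> supported n v -> all_supported n (rcons K v).
Proof.
move=> sK sv k; rewrite size_rcons ltnS leq_eqVlt nth_rcons.
case/orP => [/eqP ->|ltkK]; first by rewrite ltnn eqxx.
by rewrite ltkK; apply: sK.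
Qed.

Lemma inspan_supported n K v : all_supported n K -> inspan K v -> supported n v.
Proof. by move=> sK [c Hc] j lenj; rewrite Hc big1 // => k _; rewrite sK ?mulr0. Qed.

Lemma heard_lt n K j : all_supported n K -> heard K j -> (j < n)%N.
Proof.
move=> sK [v [Kv vj]]; rewrite ltnNge; apply/negP => lenj.
by rewrite (inspan_supported sK Kv lenj) eqxx in vj.
Qed.

Lemma decoded_heard K j : decoded K j -> heard K j.
Proof. by exists (cvunit j); rewrite cvunit_nth eqxx oner_neq0. Qed.

Lemma inspan_rcons K w v : inspan K v -> inspan (rcons K w) v.
Proof.
case=> c Hc; exists (take (size K) c) => j; rewrite Hc size_rcons big_ord_recr /=.
rewrite [(take _ c)`_ _]nth_default ?mul0r ?addr0; last by rewrite size_take geq_minl.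
by apply: eq_bigr => k _; rewrite nth_take // nth_rcons ltn_ord.
Qed.

Lemma alldec_rcons K v m : alldec K m -> alldec (rcons K v) m.
Proof. by move=> dK j ltjm; apply: inspan_rcons; apply: dK. Qed.

Lemma mxrank_trunc_le (F : fieldType) r a b (f : 'I_r -> nat -> F) :
  (forall i k, (b <= k)%N -> f i k = 0) ->
  (\rank (\matrix_(i < r, k < a) f i k) <= \rank (\matrix_(i < r, k < b) f i k))%N.
Proof.
move=> fb; pose P : 'M[F]_(b, a) := \matrix_(j, k) ((j : nat) == k)%:R.
suff -> : \matrix_(i < r, k < a) f i k = (\matrix_(i < r, k < b) f i k) *m P.
  exact: mxrankM_maxl.
apply/matrixP => i k; rewrite !mxE; case: (ltnP k b) => ltkb.
  rewrite (bigD1 (Ordinal ltkb)) //= !mxE eqxx mulr1 big1 ?addr0 // => j njk.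
  rewrite !mxE (_ : ((j : nat) == k) = false) ?mulr0 //.
  by apply/negbTE; apply: contra njk => /eqP Ejk; apply/eqP/val_inj.
rewrite fb // big1 // => j _; rewrite !mxE (_ : ((j : nat) == k) = false) ?mulr0 //.
by apply/negbTE; rewrite neq_ltn (leq_trans (ltn_ord j) ltkb).
Qed.

Definition kmxn n (K : seq cv) : 'M['F_3]_(size K, n) :=
  \matrix_(i < size K, j < n) (nth [::] K i)`_j.

Definition rowv n (v : cv) : 'rV['F_3]_n := \row_(j < n) v`_j.

Lemma rank_kmxn n K : all_supported n K -> rank K = \rank (kmxn n K).
Proof.
move=> sK; apply/eqP; rewrite eqn_leq.
apply/andP; split;
  apply: (@mxrank_trunc_le _ _ _ _ (fun i k => (nth [::] K i)`_k)) => i k lek.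
  exact: sK.
apply: nth_default; apply: leq_trans lek.
apply: (@leq_bigmax_seq _ _ xpredT (fun v : cv => size v)) => //.
exact: mem_nth.
Qed.

Lemma inspan_submx n K v : inspan K v -> (rowv n v <= kmxn n K)%MS.
Proof.
case=> c Hc; apply/submxP; exists (\row_(k < size K) c`_k).
by apply/rowP => j; rewrite !mxE Hc; apply: eq_bigr => k _; rewrite !mxE.
Qed.

Lemma submx_inspan n K v :
  all_supported n K -> supported n v -> (rowv n v <= kmxn n K)%MS -> inspan K v.
Proof.
move=> sK sv /submxP [C EC].
exists (mkseq (fun k => if insub k is Some i then C ord0 i else 0) (size K)) => j.
case: (ltnP j n) => ltjn.
  have := congr1 (fun M : 'rV['F_3]_n => M ord0 (Ordinal ltjn)) EC; rewrite !mxE => ->.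
  by apply: eq_bigr => k _; rewrite !mxE nth_mkseq // valK.
by rewrite sv // big1 // => k _; rewrite sK ?mulr0.
Qed.

Lemma rank_le_support n K : all_supported n K -> (rank K <= n)%N.
Proof. by move=> sK; rewrite (rank_kmxn sK) rank_leq_col. Qed.

Lemma alldec_full_rank n K : all_supported n K -> rank K = n -> alldec K n.
Proof.
move=> sK rK j ltjn; apply: (submx_inspan sK (supported_cvunit ltjn)).
by apply: submx_full; rewrite /row_full -(rank_kmxn sK) rK.
Qed.

Lemma alldec_rank_ge m K : all_supported m.+1 K -> alldec K m -> (m <= rank K)%N.
Proof.
move=> sK dK; rewrite (rank_kmxn sK).
suff pidK : ((pid_mx m : 'M['F_3]_(m, m.+1)) <= kmxn m.+1 K)%MS.
  by have := mxrankS pidK; rewrite rank_pid_mx.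
apply/row_subP => i.
have -> : row i (pid_mx m : 'M['F_3]_(m, m.+1)) = rowv m.+1 (cvunit i).
  by apply/rowP => k; rewrite !mxE cvunit_nth ltn_ord andbT eq_sym.
exact: inspan_submx (dK i (ltn_ord i)).
Qed.

Lemma maxrank_ge Ks i : (rank (Ks i) <= maxrank Ks)%N.
Proof. exact: (@leq_bigmax _ (fun i => rank (Ks i))). Qed.

Lemma maxrank_attained Ks : exists i, maxrank Ks = rank (Ks i).
Proof. by have [i Ei] := @eq_bigmax _ (fun i => rank (Ks i)) ltac:(by rewrite card_ord); exists i. Qed.

Definition sets_within (Q : nat -> Prop) (Ss : seq (nat -> Prop)) : Prop :=
  foldr (fun P acc => (forall j, P j -> Q j) /\ acc) True Ss.

Lemma first_oldest_within Q Ss p :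
  sets_within Q Ss -> first_oldest Ss (Some p) -> Q p.
Proof.
elim: Ss => [|P Ss IH] //= [PQ SsQ] [[_ [q [[Pq _] [->]]]] | [_ Hp]].
  exact: PQ.
exact: IH.
Qed.

Lemma plus_opt_supported n m Ss o :
  (m < n)%N -> sets_within (fun j => j < n)%N Ss -> first_oldest Ss o ->
  supported n (plus_opt m o).
Proof.
move=> ltmn SsQ; case: o => [p|] /= Ho; last exact: supported_cvunit.
exact: supported_sum2 (first_oldest_within SsQ Ho).
Qed.

Section Transmission.

Variables (Ks : knowledge) (N D : 'I_3) (m a : nat).
Hypotheses (suppN : all_supported m.+1 (Ks N)) (suppD : all_supported m.+1 (Ks D)).

Lemma S2_lt j : S2 Ks N D j -> (j < m.+1)%N.
Proof. by case=> /decoded_heard /(heard_lt suppN). Qed.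
Lemma S3_lt j : S3 Ks N D j -> (j < m.+1)%N.
Proof. by case=> /decoded_heard /(heard_lt suppN). Qed.
Lemma S4_lt j : S4 Ks N D j -> (j < m.+1)%N.
Proof. by case=> /decoded_heard /(heard_lt suppD). Qed.
Lemma S5_lt j : S5 Ks N D j -> (j < m.+1)%N.
Proof. by case=> [[/(heard_lt suppD)]]. Qed.
Lemma S6_lt j : S6 Ks N D m a j -> (j < m.+1)%N.
Proof. by case=> [[ltjm|[-> _]] _] //; apply: ltnW. Qed.

Lemma case1_supported x v : case1 Ks N D m a x -> x = Some v -> supported m.+1 v.
Proof.
case=> [[_ [_ [p [q [[/S2_lt ltp _] [[/S4_lt ltq _] ->]]]]]] |
        [[_ [_ [_ [p [q [[/S3_lt ltp _] [[/S4_lt ltq _] ->]]]]]]] |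
         [_ [_ [[p|] [Ho ->]]]]]] //= [<-]; try exact: supported_sum2.
apply/supported_cvunit/(@first_oldest_within (fun j => j < m.+1)%N _ _ _ Ho).
by do !split; [exact: S5_lt | exact: S6_lt | exact: S2_lt | exact: S3_lt | exact: S4_lt].
Qed.

Lemma transmit_supported x v : transmit Ks N D m a x -> x = Some v -> supported m.+1 v.
Proof.
have within456 : sets_within (fun j => j < m.+1)%N [:: S4 Ks N D; S5 Ks N D; S6 Ks N D m a].
  by do !split; [exact: S4_lt | exact: S5_lt | exact: S6_lt].
have within236 : sets_within (fun j => j < m.+1)%N [:: S2 Ks N D; S3 Ks N D; S6 Ks N D m a].
  by do !split; [exact: S2_lt | exact: S3_lt | exact: S6_lt].
case=> [[_ Hc]|[[_ [_ [y [Hy ->]]]]|[[_ [_ [o [Ho Hx]]]]|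
        [[_ [_ [o [Ho ->]]]]|[[_ [_ [o [Ho ->]]]]|[_ [_ [_ [_ [_ ->]]]]]]]]]].
- exact: case1_supported Hc.
- move=> [<-]; case: y Hy => [w Hy|_]; last exact: supported_cvunit.
  exact: supported_cvadd (supported_cvunit _) (case1_supported Hy (erefl _)).
- case: o Ho Hx => [p Ho|_ -> [<-]]; last exact: supported_cvunit.
  have ltp := first_oldest_within within456 Ho.
  case=> [[_ [c [_ [-> _]]]]|[_ ->]] [<-]; last exact: supported_sum2.
  exact: supported_cvadd (supported_cvunit _) (supported_cvscale _ (supported_cvunit ltp)).
- by move=> [<-]; apply: plus_opt_supported Ho.
- by move=> [<-]; apply: plus_opt_supported Ho.
- by move=> [<-]; apply: supported_cvunit.
Qed.

End Transmission.

Lemma receive_all_supported n Ks x r i :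
  all_supported n (Ks i) -> (forall v, x = Some v -> supported n v) ->
  all_supported n (receive Ks x r i).
Proof.
rewrite /receive; case: x => [v|] // sK sx; case: (r i) => //.
exact: all_supported_rcons (sx v (erefl _)).
Qed.

Lemma receive_alldec Ks x r i m : alldec (Ks i) m -> alldec (receive Ks x r i) m.
Proof. by rewrite /receive; case: x => [v|] //; case: (r i) => //; apply: alldec_rcons. Qed.

Lemma maxrank_ge_alldec m Ks i : all_supported m.+1 (Ks i) -> alldec (Ks i) m ->
  (m <= maxrank Ks)%N.
Proof. by move=> sK dK; apply: leq_trans (alldec_rank_ge sK dK) (maxrank_ge Ks i). Qed.

Lemma alldec_maxrank m Ks i0 :
  (forall i, all_supported m.+1 (Ks i)) -> alldec (Ks i0) m ->
  exists i, alldec (Ks i) (maxrank Ks).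
Proof.
move=> sKs dK0; have [i1 Emax] := maxrank_attained Ks.
have lo := maxrank_ge_alldec (sKs i0) dK0.
have hi : (maxrank Ks <= m.+1)%N by rewrite Emax rank_le_support.
case: (ltngtP (maxrank Ks) m.+1) hi => // [ltm _|Em _].
  by exists i0; have -> : maxrank Ks = m by apply/eqP; rewrite eqn_leq -ltnS ltm lo.
by exists i1; rewrite Em; apply: alldec_full_rank; rewrite -?Emax.
Qed.

Definition slot_invariant (s : state) : Prop :=
  [/\ mcur s = maxrank (know s),
      forall i, all_supported (mcur s).+1 (know s i)
    & exists i, alldec (know s i) (mcur s)].

Lemma slot_invariant_step a r s s' :
  slot_invariant s -> step a r s s' -> slot_invariant s'.
Proof.
move=> [_ sKs [i0 dK0]] [x [Htr [Ek [Em' _]]]].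
have sx v : x = Some v -> supported (mcur s).+1 v := transmit_supported (sKs _) (sKs _) Htr.
have sKs' i : all_supported (mcur s).+1 (know s' i).
  by rewrite Ek; apply: receive_all_supported.
have dK0' : alldec (know s' i0) (mcur s) by rewrite Ek; apply: receive_alldec.
have [i dKi] := alldec_maxrank sKs' dK0'.
split=> //; last by exists i; rewrite Em'.
move=> j; rewrite Em'; apply: (all_supported_leq _ (sKs' j)).
by rewrite ltnS (maxrank_ge_alldec (sKs' i0) dK0').
Qed.

Theorem theorem11 (arr : nat -> nat) (rcv : nat -> 'I_3 -> bool)
  (st : nat -> state) :
  (forall s t, (s <= t)%N -> (arr s <= arr t)%N) ->
  initial (st 0%N) ->
  (forall t, step (arr t) (rcv t) (st t) (st t.+1)) ->
  forall t, (0 < t)%N ->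
    exists i : 'I_3, alldec (know (st t) i) (maxrank (know (st t))).
Proof.
move=> _ [empty0 [_ [_ [_ m0]]]] Hstep t _.
suff [Em _ [i dK]] : slot_invariant (st t) by exists i; rewrite -Em.
elim: t => [|t IH]; last exact: slot_invariant_step IH (Hstep t).
have r0 : maxrank (know (st 0%N)) = 0%N.
  by apply/eqP; rewrite -leqn0; apply/bigmax_leqP => i _; rewrite /rank empty0 rank_leq_row.
split; rewrite ?m0 //; last by exists ord0.
by move=> i k; rewrite empty0.
Qed.
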